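(* Let $F$ be a dill map with diameter $\delta$ and local rule $f$, and let $M,M'\in\mathbb N$ be such that for every $u\in A^*$ and every $j\in\{0,\dots,|u|-1\}$, $d_L(f^*(D_j(u)),f^*(u))\le M+\frac{|f^*(u)|-|f^*(D_j(u))|}{2}$ and $d_L(f^*(D_j(u)),f^*(u))\le M'-\frac{|f^*(u)|-|f^*(D_j(u))|}{2}$. Let $L>0$ and let $x\in A^{\mathbb N}$ be such that $|f(x_{[i,i+\delta)})|\ge L$ for every $i\in\mathbb N$. Then for every $y\in A^{\mathbb N}$, $\mathfrak d_L(F(x),F(y))\le\frac{M+M'}{L}\,\mathfrak d_L(x,y)$.
   Context: $A$ is a finite alphabet, $A^*$ the finite words, $A^+$ the nonempty finite words, $u_{[i,j)}=u_i\cdots u_{j-1}$. A dill map with diameter $\delta\ge1$ has local rule $f:A^\delta\to A^+$ and is $F(x)=f(x_{[0,\delta)})f(x_{[1,\delta+1)})\cdots$. $f^*(u)=f(u_{[0,\delta)})f(u_{[1,\delta+1)})\cdots f(u_{[|u|-\delta,|u|)})$ if $|u|\ge\delta$, and the empty word otherwise. $D_j(u)$ is $u$ with its letter at position $j$ deleted. The Levenshtein distance is $d_L(u,v)=\frac{|u|+|v|}{2}-\ell$, $\ell$ the length of a longest common subsequence. The Feldman pseudo-metric is $\mathfrak d_L(x,y)=\limsup_{l\to\infty}d_L(x_{[0,l)},y_{[0,l)})/l$. *)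

From HB Require Import structures.
From mathcomp Require Import all_boot all_order all_algebra.
From mathcomp Require Import all_classical all_reals all_analysis.
Set Implicit Arguments. Unset Strict Implicit. Unset Printing Implicit Defensive.
Import Order.TTheory GRing.Theory Num.Theory.

Section Dill.
Variable A : finType.

Definition lcs (u v : seq A) : nat :=
  \max_(i < (size u).+1 | [exists w : i.-tuple A, subseq w u && subseq w v]) i.

Definition dL (R : realType) (u v : seq A) : R :=
  ((size u + size v)%:R / 2 - (lcs u v)%:R)%R.

Definition delete_at (j : nat) (u : seq A) : seq A := take j u ++ drop j.+1 u.

(* the windows u_[i,i+delta), i = 0 .. |u|-delta (empty if |u| < delta) *)
Definition windows (delta : nat) (u : seq A) : seq (delta.-tuple A) :=
  pmap insub [seq take delta (drop i u) | i <- iota 0 (size u - delta).+1].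

Definition fstar (delta : nat) (f : delta.-tuple A -> seq A) (u : seq A) : seq A :=
  flatten [seq f w | w <- windows delta u].

Definition prefix (x : nat -> A) (l : nat) : seq A := mkseq x l.

Definition window_at (delta : nat) (x : nat -> A) (i : nat) : delta.-tuple A :=
  [tuple x (i + k) | k < delta].

(* the dill map F(x) = f(x_[0,delta)) f(x_[1,delta+1)) ... ; its n-th letter
   lies in f^*(x_[0,n+delta)), which has length >= n+1 when f has nonempty values *)
Definition dill (delta : nat) (f : delta.-tuple A -> seq A) (x : nat -> A) : nat -> A :=
  fun n => nth (x 0%N) (fstar f (prefix x (n + delta))) n.

Definition feldman (R : realType) (x y : nat -> A) : \bar R :=
  limn_esup (fun l : nat => ((dL R (prefix x l) (prefix y l)) / l%:R)%:E).

End Dill.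

From Pilot Require Import Defs.
From HB Require Import structures.
From mathcomp Require Import all_boot all_order all_algebra.
From mathcomp Require Import all_classical all_reals all_analysis.
From mathcomp Require Import zify lra.
Import Order.TTheory GRing.Theory Num.Theory.
Set Implicit Arguments. Unset Strict Implicit. Unset Printing Implicit Defensive.

(* Write ldist u v := |u| - lcs(u, v), the number of letters of u outside a longest common
   subsequence with v, so that d_L(u, v) = (ldist u v + ldist v u) / 2.  The two hypotheses on f
   say exactly that ldist (f^*(D_j u)) (f^*(u)) <= M and ldist (f^*(u)) (f^*(D_j u)) <= M'.
   As ldist satisfies the triangle inequality, deleting letters one at a time down to a longest
   common subsequence of two words u, v of equal length gives
   ldist (f^*(u)) (f^*(v)) <= (M + M') d_L(u, v).  Choosing l with F(x)_[0,n) a truncation of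
   f^*(x_[0,l)) by fewer than max |f| letters, we have l <= n / L + delta because every block
   of F(x) has length at least L, and
   d_L(F(x)_[0,n), F(y)_[0,n)) <= (M + M') d_L(x_[0,l), y_[0,l)) + max |f|,
   and dividing by n and passing to the limsup gives the factor (M + M') / L. *)

Section LongestCommonSubsequence.
Variable A : finType.
Implicit Types u v w : seq A.

Lemma lcs_ge u v w : subseq w u -> subseq w v -> size w <= lcs u v.
Proof.
move=> wu wv; have wu_lt : size w < (size u).+1 by rewrite ltnS size_subseq.
apply: (@leq_bigmax_cond _ _ _ (Ordinal wu_lt)).
by apply/existsP; exists (in_tuple w); rewrite wu wv.
Qed.

Lemma lcs_witness u v : exists2 w, subseq w u /\ subseq w v & size w = lcs u v.
Proof.
rewrite /lcs.
set P := fun i : 'I_(size u).+1 => [exists w : i.-tuple A, subseq w u && subseq w v].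
have [|i Pi ->] := @eq_bigmax_cond _ P (@nat_of_ord _).
  by apply/card_gt0P; exists ord0; apply/existsP; exists [tuple]; rewrite !sub0seq.
by case/existsP: Pi => w /andP[wu wv]; exists (val w); rewrite ?size_tuple.
Qed.

Lemma lcs_sym u v : lcs u v = lcs v u.
Proof.
have le_lcs u1 v1 : lcs u1 v1 <= lcs v1 u1.
  by have [w [wu wv] <-] := lcs_witness u1 v1; apply: lcs_ge.
by apply/eqP; rewrite eqn_leq !le_lcs.
Qed.

Lemma lcs_le_size u v : lcs u v <= size u.
Proof. by have [w [wu _] <-] := lcs_witness u v; apply: size_subseq. Qed.

Lemma lcs_subseq u v : subseq u v -> lcs u v = size u.
Proof. by move=> uv; apply/eqP; rewrite eqn_leq lcs_le_size lcs_ge. Qed.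

Lemma mask_meet (s : seq A) m1 m2 : size m1 = size s -> size m2 = size s ->
  exists m, [/\ subseq (mask m s) (mask m1 s), subseq (mask m s) (mask m2 s) &
    size (mask m1 s) + size (mask m2 s) <= size (mask m s) + size s].
Proof.
elim: s m1 m2 => [|a s IHs] [|b1 m1] [|b2 m2] //=; first by exists [::].
move=> [s1] [s2].
have [m [sub1 sub2 le_sz]] := IHs _ _ s1 s2.
exists ((b1 && b2) :: m); case: b1; case: b2 => /=; rewrite ?eqxx;
  split; rewrite ?sub1 ?sub2 //; try lia;
  first [exact: subseq_trans sub1 (subseq_cons _ a) |
         exact: subseq_trans sub2 (subseq_cons _ a)].
Qed.

Lemma lcs_triangle u v w : lcs u v + lcs v w <= lcs u w + size v.
Proof.
have [s1 [su /subseqP[m1 sz1 s1E]] <-] := lcs_witness u v.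
have [s2 [/subseqP[m2 sz2 s2E] sw] <-] := lcs_witness v w.
subst s1 s2; have [m [sub1 sub2 le_sz]] := mask_meet sz1 sz2.
apply: leq_trans le_sz _; rewrite leq_add2r.
by apply: lcs_ge; [exact: subseq_trans sub1 su | exact: subseq_trans sub2 sw].
Qed.

Definition ldist u v := size u - lcs u v.

Lemma ldist_le_size u v : ldist u v <= size u.
Proof. exact: leq_subr. Qed.

Lemma ldist_sym u v : size u = size v -> ldist u v = ldist v u.
Proof. by rewrite /ldist lcs_sym => ->. Qed.

Lemma ldist_triangle u v w : ldist u w <= ldist u v + ldist v w.
Proof.
rewrite /ldist; have := lcs_triangle u v w.
have := lcs_le_size u v; have := lcs_le_size v w; lia.
Qed.

Lemma ldist_subseq u v : subseq u v -> ldist u v = 0.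
Proof. by move=> uv; rewrite /ldist lcs_subseq ?subnn. Qed.

Lemma ldist_subseqr u v : subseq v u -> ldist u v = size u - size v.
Proof. by move=> vu; rewrite /ldist lcs_sym lcs_subseq. Qed.

Lemma ldist_take_cat u v w n k : n <= size u -> ldist u v <= k -> ldist v u <= k ->
  ldist (take n u) (take n (v ++ w)) <= k + (size u - n).
Proof.
move=> nu uv vu; rewrite take_cat.
have tu_u : ldist (take n u) u = 0 by rewrite ldist_subseq ?take_subseq.
case: ltnP => [nv | vn].
  have tv_v : ldist (take n v) v = 0 by rewrite ldist_subseq ?take_subseq.
  have sz_eq : size (take n u) = size (take n v) by rewrite !size_takel // ltnW.
  rewrite (ldist_sym sz_eq).
  apply: leq_trans (ldist_triangle _ v _) _; rewrite tv_v.
  apply: leq_trans (ldist_triangle _ u _) _.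
  by rewrite (ldist_subseqr (take_subseq u n)) size_takel // leq_add2r.
have v_vw : ldist v (v ++ take (n - size v) w) = 0 by rewrite ldist_subseq ?prefix_subseq.
apply: leq_trans (ldist_triangle _ u _) _; rewrite tu_u.
apply: leq_trans (ldist_triangle _ v _) _; rewrite v_vw addn0.
exact: leq_trans uv (leq_addr _ _).
Qed.

Lemma size_delete_at j u : j < size u -> size (delete_at j u) = (size u).-1.
Proof. by move=> ju; rewrite size_cat size_take size_drop ju; lia. Qed.

Lemma subseq_delete_at u w : subseq w u -> size w < size u ->
  exists2 j, j < size u & subseq w (delete_at j u).
Proof.
rewrite /delete_at; elim: u w => [|a u IHu] [|b w] //= wu sz_lt.
- by exists 0; rewrite ?sub0seq.
- have [wu' | /negPf wu'] := boolP (subseq (b :: w) u).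
    by exists 0; rewrite //= drop0.
  move: wu; case: eqP => [<- | _]; last by rewrite wu'.
  move=> {}wu; have [j ju wj] := IHu w wu sz_lt.
  by exists j.+1; rewrite //= eqxx.
Qed.

End LongestCommonSubsequence.

Section Levenshtein.
Variables (R : realType) (A : finType).
Implicit Types u v : seq A.
Local Open Scope ring_scope.

Lemma dL_sym u v : dL R u v = dL R v u.
Proof. by rewrite /dL lcs_sym addnC. Qed.

Lemma dL_ldist u v : dL R u v = (ldist u v)%:R + ((size v)%:R - (size u)%:R) / 2.
Proof. by rewrite /dL /ldist natrB ?lcs_le_size // natrD; lra. Qed.

Lemma dL_eq_size u v : size u = size v -> dL R u v = (ldist u v)%:R.
Proof. by rewrite dL_ldist => ->; rewrite subrr mul0r addr0. Qed.

Lemma dL_le_ldist u v k :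
  (dL R u v <= k%:R + ((size v)%:R - (size u)%:R) / 2) = (ldist u v <= k)%N.
Proof. by rewrite dL_ldist lerD2r ler_nat. Qed.

Lemma dL_le_ldist_sym u v k :
  (dL R u v <= k%:R - ((size v)%:R - (size u)%:R) / 2) = (ldist v u <= k)%N.
Proof. by rewrite dL_sym -dL_le_ldist -mulNr opprB. Qed.

End Levenshtein.

Section LdistUnderDeletion.
Variables (A : finType) (g : seq A -> seq A) (M M' : nat).
Hypothesis g_delete_at : forall u j, j < size u ->
  ldist (g (delete_at j u)) (g u) <= M /\ ldist (g u) (g (delete_at j u)) <= M'.

Lemma ldist_image_subseq n u w : subseq w u -> size u = size w + n ->
  ldist (g w) (g u) <= n * M /\ ldist (g u) (g w) <= n * M'.
Proof.
elim: n u => [|n IHn] u wu sz_u.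
  have /eqP -> : w == u by rewrite -(size_subseq_leqif wu).2 sz_u addn0.
  by rewrite ldist_subseq.
have [j ju wj] : exists2 j, j < size u & subseq w (delete_at j u).
  by apply: subseq_delete_at wu _; rewrite sz_u addnS ltnS leq_addr.
have [IH1 IH2] : ldist (g w) (g (delete_at j u)) <= n * M /\
                 ldist (g (delete_at j u)) (g w) <= n * M'.
  by apply: IHn wj _; rewrite size_delete_at // sz_u addnS.
have [d1 d2] := g_delete_at ju.
split; apply: leq_trans (ldist_triangle _ (g (delete_at j u)) _) _.
  by rewrite mulSn addnC leq_add.
by rewrite mulSn leq_add.
Qed.

Lemma ldist_image_le u v : size u = size v -> ldist (g u) (g v) <= ldist u v * (M + M').
Proof.
move=> sz_uv; have [w [wu wv] sz_w] := lcs_witness u v.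
have sz_u : size u = size w + ldist u v by rewrite /ldist sz_w subnKC ?lcs_le_size.
have sz_v : size v = size w + ldist u v.
  by rewrite ldist_sym // /ldist lcs_sym sz_w subnKC // lcs_sym lcs_le_size.
have [_ gu_gw] := ldist_image_subseq wu sz_u.
have [gw_gv _] := ldist_image_subseq wv sz_v.
apply: leq_trans (ldist_triangle _ (g w) _) _.
by rewrite mulnDr addnC leq_add.
Qed.

End LdistUnderDeletion.

Lemma exists_crossing (s : nat -> nat) n k : s 0 < n -> n <= s k ->
  exists m, s m < n <= s m.+1.
Proof.
move=> s0_lt; elim: k => [|k IHk] le_n; first by rewrite leqNgt s0_lt in le_n.
by case: (leqP n (s k)) => [/IHk | lt_n]; last exists k; rewrite ?lt_n.
Qed.

Section DillBlocks.
Variables (A : finType) (delta : nat) (f : delta.-tuple A -> seq A).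
Implicit Type z : nat -> A.

Definition dill_blocks z m := flatten [seq f (window_at delta z i) | i <- iota 0 m].

Lemma take_drop_prefix z l i : i + delta <= l ->
  take delta (drop i (Defs.prefix z l)) = window_at delta z i.
Proof.
move=> le_l; have sz : size (take delta (drop i (Defs.prefix z l))) = delta.
  by rewrite size_takel // size_drop size_mkseq leq_subRL // (leq_trans _ le_l) ?leq_addr.
apply: (@eq_from_nth _ (z 0)) => [|k]; rewrite sz ?size_tuple // => lt_k.
rewrite nth_take // nth_drop nth_mkseq; last by rewrite (leq_trans _ le_l) ?ltn_add2l.
by rewrite -(tnth_nth _ _ (Ordinal lt_k)) tnth_mktuple.
Qed.

Lemma windows_prefix z l :
  windows delta (Defs.prefix z l) = [seq window_at delta z i | i <- iota 0 (l.+1 - delta)].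
Proof.
rewrite /windows size_mkseq; case: (ltnP l delta) => [lt_l | le_l].
  have -> : l - delta = 0 by apply/eqP; rewrite subn_eq0 ltnW.
  have -> : l.+1 - delta = 0 by apply/eqP; rewrite subn_eq0.
  rewrite /= drop0 insubF // take_oversize size_mkseq;
    [exact: ltn_eqF | exact: ltnW].
rewrite -subSn //; set s := iota 0 _.
have -> : [seq take delta (drop i (Defs.prefix z l)) | i <- s] =
          map val [seq window_at delta z i | i <- s].
  rewrite -map_comp; apply/eq_in_map => i; rewrite mem_iota => /andP[_ lt_i].
  by apply: take_drop_prefix; lia.
by rewrite (map_pK (@valK _ _ _)).
Qed.

Lemma fstar_prefix z l : fstar f (Defs.prefix z l) = dill_blocks z (l.+1 - delta).
Proof. by rewrite /fstar windows_prefix -map_comp. Qed.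

Lemma dill_blocksD z m k : dill_blocks z (m + k) =
  dill_blocks z m ++ flatten [seq f (window_at delta z i) | i <- iota m k].
Proof. by rewrite /dill_blocks iotaD map_cat flatten_cat. Qed.

Lemma dill_blocksS z m : dill_blocks z m.+1 = dill_blocks z m ++ f (window_at delta z m).
Proof. by rewrite -addn1 dill_blocksD /= cats0. Qed.

Lemma dill_blocks_extend z m m' : m <= m' -> exists s, dill_blocks z m' = dill_blocks z m ++ s.
Proof. by move=> le_m; rewrite -(subnKC le_m) dill_blocksD; eexists. Qed.

Lemma size_dill_blocks_mono z : {homo (fun m => size (dill_blocks z m)) : m m' / m <= m'}.
Proof. by move=> m m' /(dill_blocks_extend z)[s ->]; rewrite size_cat leq_addr. Qed.

Lemma nth_dill_blocks z d m m' i : i < size (dill_blocks z m) -> i < size (dill_blocks z m') ->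
  nth d (dill_blocks z m) i = nth d (dill_blocks z m') i.
Proof.
wlog le_m : m m' / m <= m'.
  move=> hwlog lt_i lt_i'; case: (leqP m m') => [le_m | /ltnW le_m]; first exact: hwlog.
  by symmetry; apply: hwlog.
by move=> lt_i _; have [s ->] := dill_blocks_extend z le_m; rewrite nth_cat lt_i.
Qed.

Lemma size_dill_blocks_ge_mul (R : realType) z (L : R) :
  (forall i, L <= (size (f (window_at delta z i)))%:R)%R ->
  forall m, (L * m%:R <= (size (dill_blocks z m))%:R)%R.
Proof.
move=> le_L; elim=> [|m IHm]; first by rewrite mulr0.
by rewrite dill_blocksS size_cat natrD -addn1 natrD mulrDr mulr1 lerD.
Qed.

Hypothesis f_nonempty : forall w, 0 < size (f w).

Lemma size_dill_blocks_ge z m : m <= size (dill_blocks z m).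
Proof.
elim: m => [|m IHm] //; rewrite dill_blocksS size_cat -addn1.
exact: leq_add IHm (f_nonempty _).
Qed.

Lemma dill_prefix z n m : n <= size (dill_blocks z m) ->
  Defs.prefix (dill f z) n = take n (dill_blocks z m).
Proof.
move=> le_n; apply: (@eq_from_nth _ (z 0)) => [|i].
  by rewrite size_mkseq size_takel.
rewrite size_mkseq => lt_i; rewrite nth_mkseq // nth_take // /dill fstar_prefix.
rewrite -addSn addnK; apply: nth_dill_blocks; last exact: leq_trans lt_i le_n.
exact: size_dill_blocks_ge.
Qed.

End DillBlocks.

Section DillPrefixes.
Variables (A : finType) (delta : nat) (f : delta.-tuple A -> seq A) (M M' : nat).
Hypothesis f_nonempty : forall w, 0 < size (f w).
Hypothesis fstar_delete_at : forall u j, j < size u ->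
  ldist (fstar f (delete_at j u)) (fstar f u) <= M /\
  ldist (fstar f u) (fstar f (delete_at j u)) <= M'.

Definition max_block_size := \max_(w : delta.-tuple A) size (f w).

Lemma ldist_dill_prefix x y n m :
  size (dill_blocks f x m) < n <= size (dill_blocks f x m.+1) ->
  ldist (Defs.prefix (dill f x) n) (Defs.prefix (dill f y) n) <=
  ldist (Defs.prefix x (m + delta)) (Defs.prefix y (m + delta)) * (M + M') + max_block_size.
Proof.
move=> /andP[lt_n le_n]; set l := m + delta.
have blocksE z : fstar f (Defs.prefix z l) = dill_blocks f z m.+1.
  by rewrite fstar_prefix -addSn addnK.
have [s yE] : exists s, dill_blocks f y n = dill_blocks f y m.+1 ++ s.
  exact/dill_blocks_extend/(leq_ltn_trans (size_dill_blocks_ge f_nonempty x m) lt_n).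
have le_n_y := size_dill_blocks_ge f_nonempty y n.
rewrite (dill_prefix f_nonempty le_n) (dill_prefix f_nonempty le_n_y) yE.
have sz_l : size (Defs.prefix x l) = size (Defs.prefix y l) by rewrite !size_mkseq.
have := ldist_image_le fstar_delete_at sz_l; rewrite !blocksE => xy.
have := ldist_image_le fstar_delete_at (esym sz_l); rewrite !blocksE (ldist_sym (esym sz_l)) => yx.
apply: leq_trans (ldist_take_cat _ le_n xy yx) _; rewrite leq_add2l.
rewrite dill_blocksS size_cat leq_subLR.
by apply: leq_add; [exact: ltnW | exact: leq_bigmax].
Qed.

Local Open Scope classical_set_scope.
Local Open Scope ring_scope.

Lemma dL_dill_prefix_near (R : realType) (L : R) x y :
  (forall i, L <= (size (f (window_at delta x i)))%:R) ->
  forall N, \forall n \near \oo, exists l, [/\ (N <= l)%N,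
    dL R (Defs.prefix (dill f x) n) (Defs.prefix (dill f y) n) <=
      (M + M')%:R * dL R (Defs.prefix x l) (Defs.prefix y l) + max_block_size%:R &
    L * l%:R <= n%:R + L * delta%:R].
Proof.
move=> le_L N; exists (size (dill_blocks f x N)).+1 => // n /= lt_n.
have [m /andP[lt_mn le_mn]] :
    exists m, (size (dill_blocks f x m) < n <= size (dill_blocks f x m.+1))%N.
  by apply: exists_crossing (size_dill_blocks_ge f_nonempty x n); apply: leq_trans lt_n.
exists (m + delta); split.
- apply: leq_trans (leq_addr _ _); rewrite leqNgt; apply/negP => lt_mN.
  by have := leq_trans le_mn (size_dill_blocks_mono f x lt_mN); rewrite leqNgt lt_n.
- rewrite !dL_eq_size ?size_mkseq // mulrC -natrM -natrD ler_nat.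
  by apply: ldist_dill_prefix; rewrite ?lt_mn.
- rewrite natrD mulrDr lerD2r; apply: le_trans (size_dill_blocks_ge_mul le_L m) _.
  by rewrite ler_nat ltnW.
Qed.

End DillPrefixes.

Section Limsup.
Variable R : realType.
Local Open Scope classical_set_scope.
Local Open Scope ereal_scope.
Implicit Type u : (\bar R)^nat.

Lemma limn_esup_le_near u a : (\forall n \near \oo, u n <= a) -> limn_esup u <= a.
Proof.
move=> ua; rewrite /limn_esup limf_esupE.
apply: (@le_trans _ _ (ereal_sup (u @` [set n | u n <= a]))).
  by apply: ereal_inf_lbound; exists [set n | u n <= a].
by apply: ge_ereal_sup => _ [n una <-].
Qed.

Lemma limn_esup_lt_near u a : limn_esup u < a -> \forall n \near \oo, u n < a.
Proof.
rewrite /limn_esup limf_esupE => /ereal_inf_lt[_ [V oV <-]] supV_lt.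
by apply: filterS oV => n Vn; apply: le_lt_trans supV_lt; apply: ereal_sup_ubound; exists n.
Qed.

Lemma limn_esup_le_eps (v : nat -> R) (t : R) :
  (forall e, (0 < e)%R -> \forall n \near \oo, (v n <= t + e)%R) ->
  limn_esup (fun n => (v n)%:E) <= t%:E.
Proof.
move=> vt; apply/lee_addgt0Pr => e e_gt0; apply: limn_esup_le_near.
by apply: filterS (vt e e_gt0) => n; rewrite -EFinD lee_fin.
Qed.

End Limsup.

Local Open Scope classical_set_scope.
Local Open Scope ring_scope.

Lemma feldman_fin_num (R : realType) (A : finType) (x y : nat -> A) :
  feldman R x y \is a fin_num.
Proof.
have ratio_01 l : 0 <= dL R (Defs.prefix x l) (Defs.prefix y l) / l%:R <= 1.
  rewrite dL_eq_size ?size_mkseq // divr_ge0 //=; case: l => [|l].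
    by rewrite invr0 mulr0.
  by rewrite ler_pdivrMr ?ltr0n // mul1r ler_nat -[X in (_ <= X)%N](size_mkseq x) ldist_le_size.
rewrite ge0_fin_numE; last first.
  by apply: limf_esup_ge0 => // l; rewrite lee_fin; case/andP: (ratio_01 l).
apply: le_lt_trans (ltry 1%R); apply: limn_esup_le_near; apply: nearW => l.
by rewrite lee_fin; case/andP: (ratio_01 l).
Qed.

Lemma limn_esup_ratio_le (R : realType) (d e : nat -> R) (k K C L s : R) :
  0 < L -> 0 <= k -> (forall l, 0 <= e l) ->
  (forall N, \forall n \near \oo, exists l,
     [/\ (N <= l)%N, d n <= k * e l + K & L * l%:R <= n%:R + C]) ->
  (limn_esup (fun l => (e l / l%:R)%:E) <= s%:E)%E ->
  (limn_esup (fun n => (d n / n%:R)%:E) <= (k / L * s)%:E)%E.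
Proof.
move=> L_gt0 k_ge0 e_ge0 d_le e_le; apply: limn_esup_le_eps => eps eps_gt0.
set c := k / L; set r := eps / (c + 1).
have c_ge0 : 0 <= c by rewrite divr_ge0 // ltW.
have r_gt0 : 0 < r by rewrite divr_gt0 // ltr_wpDl.
have kE : k = c * L by rewrite divfK // gt_eqF.
have epsE : eps = r * (c + 1) by rewrite divfK // gt_eqF // ltr_wpDl.
have sup_lt : (limn_esup (fun l => (e l / l%:R)%:E) < (s + r)%:E)%E.
  by apply: le_lt_trans e_le _; rewrite lte_fin ltrDl.
have [N _ e_lt] : \forall l \near \oo, e l / l%:R < s + r.
  by apply: filterS (limn_esup_lt_near sup_lt) => l; rewrite lte_fin.
near=> n.
have [l [lt_Nl dn_le Ll_le]] :
    exists l, [/\ (N < l)%N, d n <= k * e l + K & L * l%:R <= n%:R + C].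
  by near: n; apply: d_le.
have l_gt0 : (0 < l%:R :> R) by rewrite ltr0n (leq_ltn_trans _ lt_Nl).
have el_lt := e_lt l (ltnW lt_Nl).
have el_le : e l <= (s + r) * l%:R by rewrite -ler_pdivrMr // ltW.
have sr_ge0 : 0 <= s + r by apply: le_trans (ltW el_lt); rewrite divr_ge0 ?e_ge0 // ltW.
have n_gt0 : (0 < n%:R :> R) by rewrite ltr0n; near: n; exact: nbhs_infty_gt.
have rest_le : c * (s + r) * C + K <= r * n%:R.
  by rewrite -ler_pdivrMl //; near: n; exact: nbhs_infty_ger.
have ke_le : k * e l <= k * ((s + r) * l%:R) by rewrite ler_wpM2l.
have cLl_le : c * (s + r) * (L * l%:R) <= c * (s + r) * (n%:R + C).
  by rewrite ler_wpM2l // mulr_ge0.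
rewrite ler_pdivrMr // epsE; rewrite kE in dn_le ke_le; lra.
Unshelve. all: by end_near.
Qed.

Theorem lemmal (R : realType) (A : finType) (delta : nat)
  (f : delta.-tuple A -> seq A) (M M' : nat) (L : R) (x : nat -> A) :
  (0 < delta)%N ->
  (forall w : delta.-tuple A, (0 < size (f w))%N) ->
  (forall (u : seq A) (j : nat), (j < size u)%N ->
     (dL R (fstar f (delete_at j u)) (fstar f u) <=
        M%:R + ((size (fstar f u))%:R - (size (fstar f (delete_at j u)))%:R) / 2)%R /\
     (dL R (fstar f (delete_at j u)) (fstar f u) <=
        M'%:R - ((size (fstar f u))%:R - (size (fstar f (delete_at j u)))%:R) / 2)%R) ->
  (0 < L)%R ->
  (forall i : nat, L <= (size (f (window_at delta x i)))%:R)%R ->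
  forall y : nat -> A,
    (feldman R (dill f x) (dill f y) <=
       ((M + M')%:R / L)%:E * feldman R x y)%E.
Proof.
(* The argument never uses [0 < delta]. *)
move=> _ f_nonempty fstar_delete_at L_gt0 le_L y.
have fstar_delete_at_ldist u j : (j < size u)%N ->
    (ldist (fstar f (delete_at j u)) (fstar f u) <= M)%N /\
    (ldist (fstar f u) (fstar f (delete_at j u)) <= M')%N.
  by move=> /fstar_delete_at[]; rewrite dL_le_ldist dL_le_ldist_sym.
have [s sE] : exists s, feldman R x y = s%:E.
  by exists (fine (feldman R x y)); rewrite fineK ?feldman_fin_num.
rewrite sE -EFinM.
apply: (limn_esup_ratio_le (e := fun l => dL R (Defs.prefix x l) (Defs.prefix y l))
                           (K := (max_block_size f)%:R) (C := L * delta%:R)) => //.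
- by move=> l; rewrite dL_eq_size ?size_mkseq.
- move=> N; have := dL_dill_prefix_near f_nonempty fstar_delete_at_ldist y le_L N.
  by apply: filterS => n.
- by rewrite -sE.
Qed.
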